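(* For every set of formulas $\Gamma$ and formula $\phi$: if $\Gamma\models_{\mathbf{CK}}\phi$ then $\Gamma\vdash_{\mathbf{CK}}\phi$.
   Context: Formulas: built from propositional variables and the constant $\bot$ using $\lnot$, the binary connectives $\supset,\land,\lor$, and two binary conditional operators $[\phi]\psi$ and $\langle\phi\rangle\psi$ (treated as primitive by tableau rules). $\top$ abbreviates $\lnot\bot$. Segerberg model: $M=\langle U,P,R,V\rangle$ with $U\neq\emptyset$, $P\subseteq\wp(U)$, $R:P\to\wp(U\times U)$, $V:\mathrm{Var}\to P$, such that $\emptyset,U\in P$; $P$ is closed under complement, binary intersection and union; and for $S,T\in P$, $\{x\in U\mid R_S(x)\subseteq T\}\in P$, where $R_S=R(S)$ and $R_S(x)=\{y\mid (x,y)\in R_S\}$. Truth: $M,x\not\models\bot$; $M,x\models p$ iff $x\in V(p)$; Boolean connectives as usual; $M,x\models[\phi]\psi$ iff $M,y\models\psi$ for all $y\in R_\phi(x)$; $M,x\models\langle\phi\rangle\psi$ iff $M,y\models\psi$ for some $y\in R_\phi(x)$; here $\|\phi\|=\{x\mid M,x\models\phi\}$ (which lies in $P$) and $R_\phi=R_{\|\phi\|}$. $\Gamma\models_{\mathbf{CK}}\phi$ iff for every Segerberg model $M$ and $x\in U$ with $M,x\models\psi$ for all $\psi\in\Gamma$, $M,x\models\phi$. Tableaux: indices are positive integers. Prefixed formulas are expressions $i:\phi$ and $i\,r_\phi\,j$. For a set $\Gamma$ of formulas and a formula $\phi$, a tableau for $(\Gamma,\phi)$ is a finite downward-branching tree labelled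 by prefixed formulas, each of which is either an assumption ($1:\psi$ with $\psi\in\Gamma$, or $1:\lnot\phi$) or obtained by applying a branch extension rule to prefixed formulas on its branch; applying a non-branching rule appends its conclusions to the branch, applying a branching rule splits the branch into one child branch per alternative, each alternative appending its listed conclusions. A branch is closed if it contains $i:\chi$ and $i:\lnot\chi$ for some $i,\chi$, or contains $i:\bot$; a tableau is closed if all branches are closed. $\Gamma\vdash_X\phi$ means there is a closed $X$-tableau for $(\Gamma,\phi)$. Basic ($\mathbf{Ck}$) rules: from $i:\phi\land\psi$ add $i:\phi,i:\psi$; from $i:\lnot(\phi\land\psi)$ branch into $i:\lnot\phi\mid i:\lnot\psi$; from $i:\phi\lor\psi$ branch into $i:\phi\mid i:\psi$; from $i:\lnot(\phi\lor\psi)$ add $i:\lnot\phi,i:\lnot\psi$; from $i:\phi\supset\psi$ branch into $i:\lnot\phi\mid i:\psi$; from $i:\lnot(\phi\supset\psi)$ add $i:\phi,i:\lnot\psi$; from $i:\lnot\lnot\phi$ add $i:\phi$; ($\Box$) from $i:[\phi]\psi$ and $i\,r_\phi\,j$ add $j:\psi$; ($\lnot\Box$) from $i:\lnot[\phi]\psi$ add $i\,r_\phi\,j$ and $j:\lnot\psi$ with $j$ new to the branch; ($\Diamond$) from $i:\langle\phi\rangle\psi$ add $i\,r_\phi\,j$ and $j:\psi$ with $j$ new; ($\lnot\Diamond$) from $i:\lnot\langle\phi\rangle\psi$ and $i\,r_\phi\,j$ add $j:\lnot\psi$. (cut) for any index $i$ already on the branch and any formula $\phi$, branch into $i:\phi\mid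 i:\lnot\phi$. (ea) from $i\,r_\phi\,j$ and any formula $\psi$, branch into ($k:\lnot\phi$, $k:\psi$) $\mid$ ($k:\phi$, $k:\lnot\psi$) $\mid$ $i\,r_\psi\,j$, with $k$ new to the branch. $\mathbf{CK}$-tableaux use the basic rules, cut and ea. *)

From Stdlib Require Import List.
Import ListNotations.

Inductive form : Type :=
| Var : nat -> form
| Bot : form
| Neg : form -> form
| Imp : form -> form -> form
| And : form -> form -> form
| Or  : form -> form -> form
| Box : form -> form -> form
| Dia : form -> form -> form.

Definition Top : form := Neg Bot.

(** Sets of worlds are predicates [U -> Prop]; since sets are extensional,
    we require [P] and [R] to respect extensional equality of predicates.
    [R] is given on all predicates, but only its values on members of [P]
    matter. *)
Record model : Type := {
  U : Type;
  u0 : U;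
  P : (U -> Prop) -> Prop;
  R : (U -> Prop) -> U -> U -> Prop;
  V : nat -> U -> Prop;
  P_ext : forall S T : U -> Prop, (forall x, S x <-> T x) -> P S -> P T;
  R_ext : forall S T : U -> Prop, P S -> (forall x, S x <-> T x) ->
            forall x y, R S x y <-> R T x y;
  P_empty : P (fun _ => False);
  P_full  : P (fun _ => True);
  P_compl : forall S, P S -> P (fun x => ~ S x);
  P_inter : forall S T, P S -> P T -> P (fun x => S x /\ T x);
  P_union : forall S T, P S -> P T -> P (fun x => S x \/ T x);
  P_box   : forall S T, P S -> P T -> P (fun x => forall y, R S x y -> T y);
  V_P     : forall p, P (V p)
}.

Fixpoint sat (M : model) (x : U M) (f : form) : Prop :=
  match f with
  | Var p => V M p x
  | Bot => False
  | Neg a => ~ sat M x a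
  | Imp a b => sat M x a -> sat M x b
  | And a b => sat M x a /\ sat M x b
  | Or a b => sat M x a \/ sat M x b
  | Box a b => forall y, R M (fun z => sat M z a) x y -> sat M y b
  | Dia a b => exists y, R M (fun z => sat M z a) x y /\ sat M y b
  end.

Definition entails (Gamma : form -> Prop) (phi : form) : Prop :=
  forall (M : model) (x : U M),
    (forall psi, Gamma psi -> sat M x psi) -> sat M x phi.

(** Prefixed formulas: [PF i phi] is  i : phi ;  [PR i phi j] is  i r_phi j.
    Indices are positive naturals. *)
Inductive pform : Type :=
| PF : nat -> form -> pform
| PR : nat -> form -> nat -> pform.

Definition branch := list pform.

Definition occurs (i : nat) (B : branch) : Prop :=
  exists a, (In (PF i a) B \/ exists j, In (PR i a j) B \/ In (PR j a i) B).

Definition fresh (j : nat) (B : branch) : Prop := 0 < j /\ ~ occurs j B.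

Definition closed_branch (B : branch) : Prop :=
  (exists i c, In (PF i c) B /\ In (PF i (Neg c)) B) \/
  (exists i, In (PF i Bot) B).

Inductive rule_app (B : branch) : list (list pform) -> Prop :=
| r_and i a b : In (PF i (And a b)) B ->
    rule_app B [[PF i a; PF i b]]
| r_nand i a b : In (PF i (Neg (And a b))) B ->
    rule_app B [[PF i (Neg a)]; [PF i (Neg b)]]
| r_or i a b : In (PF i (Or a b)) B ->
    rule_app B [[PF i a]; [PF i b]]
| r_nor i a b : In (PF i (Neg (Or a b))) B ->
    rule_app B [[PF i (Neg a); PF i (Neg b)]]
| r_imp i a b : In (PF i (Imp a b)) B ->
    rule_app B [[PF i (Neg a)]; [PF i b]]
| r_nimp i a b : In (PF i (Neg (Imp a b))) B ->
    rule_app B [[PF i a; PF i (Neg b)]]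
| r_nneg i a : In (PF i (Neg (Neg a))) B ->
    rule_app B [[PF i a]]
| r_box i j a b : In (PF i (Box a b)) B -> In (PR i a j) B ->
    rule_app B [[PF j b]]
| r_nbox i j a b : In (PF i (Neg (Box a b))) B -> fresh j B ->
    rule_app B [[PR i a j; PF j (Neg b)]]
| r_dia i j a b : In (PF i (Dia a b)) B -> fresh j B ->
    rule_app B [[PR i a j; PF j b]]
| r_ndia i j a b : In (PF i (Neg (Dia a b))) B -> In (PR i a j) B ->
    rule_app B [[PF j (Neg b)]]
| r_cut i a : occurs i B ->
    rule_app B [[PF i a]; [PF i (Neg a)]]
| r_ea i j k a b : In (PR i a j) B -> fresh k B ->
    rule_app B [[PF k (Neg a); PF k b]; [PF k a; PF k (Neg b)]; [PR i b j]].

Definition assumption (Gamma : form -> Prop) (phi : form) (p : pform) : Prop :=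
  (exists psi, Gamma psi /\ p = PF 1 psi) \/ p = PF 1 (Neg phi).

(** [closable Gamma phi B]: the branch [B] (listed most recent first) can be
    extended to a finite tree all of whose branches are closed, where each
    new node is an assumption or obtained by a rule. *)
Inductive closable (Gamma : form -> Prop) (phi : form) : branch -> Prop :=
| cl_closed B : closed_branch B -> closable Gamma phi B
| cl_assume B p : assumption Gamma phi p ->
    closable Gamma phi (p :: B) -> closable Gamma phi B
| cl_rule B alts : rule_app B alts ->
    (forall A, In A alts -> closable Gamma phi (rev A ++ B)) ->
    closable Gamma phi B.

Definition derivable (Gamma : form -> Prop) (phi : form) : Prop :=
  closable Gamma phi [].

(* Call a finite list of formulas inconsistent when it has a
   closed tableau without assumptions, all at one index.  The worlds are the maximal
   consistent sets, [P] consists of the truth sets of formulas, and [R_S w v] holds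
   when [v] contains [c] whenever [w] contains [[f]c] for a formula [f] defining [S].
   The ea rule makes [[f]c ∈ w] depend only on the truth set of [f], so any one
   defining formula determines [R_S].  The rules for [¬[f]p] and [<f>p] show that
   [¬p], resp. [p], together with [{c | [f]c ∈ w}] is consistent, and Lindenbaum's
   lemma turns this into the worlds needed by the truth lemma for the conditionals.
   Renaming tableau indices lets a refutation at index 1 be reused at any index. *)

From Pilot Require Import Defs.
From Stdlib Require Import List Arith Lia Classical ClassicalEpsilon Cantor.
Import ListNotations.

Inductive refutable : branch -> Prop :=
| ref_closed B : closed_branch B -> refutable B
| ref_rule B alts : rule_app B alts ->
    (forall A, In A alts -> refutable (rev A ++ B)) -> refutable B.

Definition rename_pform (s : nat -> nat) (q : pform) : pform :=
  match q with PF i a => PF (s i) a | PR i a j => PR (s i) a (s j) end.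

Definition embeds (s : nat -> nat) (B B' : branch) : Prop :=
  forall q, In q B -> In (rename_pform s q) B'.

Definition agrees_on (B : branch) (s s' : nat -> nat) : Prop :=
  forall i, occurs i B -> s' i = s i.

Lemma embeds_PF s B B' i a : embeds s B B' -> In (PF i a) B -> In (PF (s i) a) B'.
Proof. intros Hs H. exact (Hs _ H). Qed.

Lemma embeds_PR s B B' i a j : embeds s B B' -> In (PR i a j) B -> In (PR (s i) a (s j)) B'.
Proof. intros Hs H. exact (Hs _ H). Qed.

Lemma occurs_embeds s B B' i : embeds s B B' -> occurs i B -> occurs (s i) B'.
Proof.
  intros Hs [a [H | [j [H | H]]]]; exists a.
  - left. exact (Hs _ H).
  - right. exists (s j). left. exact (Hs _ H).
  - right. exists (s j). right. exact (Hs _ H).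
Qed.

Lemma embeds_agrees s s' B B' : embeds s B B' -> agrees_on B s s' -> embeds s' B B'.
Proof.
  intros Hs Hag [i a | i a j] Hq; cbn.
  - rewrite Hag by (exists a; left; exact Hq). exact (Hs _ Hq).
  - rewrite (Hag i), (Hag j); [exact (Hs _ Hq) | |];
      exists a; right; [exists i; right | exists j; left]; exact Hq.
Qed.

Fixpoint max_index (B : branch) : nat :=
  match B with
  | [] => 0
  | PF i _ :: B' => max i (max_index B')
  | PR i _ j :: B' => max i (max j (max_index B'))
  end.

Lemma max_index_bound q B : In q B ->
  match q with
  | PF i _ => i <= max_index B
  | PR i _ j => i <= max_index B /\ j <= max_index B
  end.
Proof.
  induction B as [|q' B IH]; cbn; [tauto|]. intros [-> | H].
  - destruct q; lia.
  - specialize (IH H). destruct q, q'; lia.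
Qed.

Lemma exists_fresh B : exists j, fresh j B.
Proof.
  exists (S (max_index B)). split; [lia|].
  intros [a [H | [j [H | H]]]]; apply max_index_bound in H; cbn in H; lia.
Qed.

Definition avoids (j : nat) (q : pform) : Prop :=
  match q with PF i _ => i <> j | PR i _ k => i <> j /\ k <> j end.

Lemma fresh_intro j B : 0 < j -> (forall q, In q B -> avoids j q) -> fresh j B.
Proof.
  intros Hj HB. split; [exact Hj|].
  intros [a [H | [k [H | H]]]]; apply HB in H; cbn in H; tauto.
Qed.

Ltac prove_fresh :=
  apply fresh_intro; [lia|]; let Hq := fresh in intros ? Hq; cbn in Hq;
  repeat (destruct Hq as [<- | Hq]; [cbn; lia|]);
  try contradiction;
  apply in_map_iff in Hq as [? [<- _]]; cbn; lia.

Definition update (s : nat -> nat) (j j' : nat) : nat -> nat :=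
  fun n => if Nat.eqb n j then j' else s n.

Lemma extend_fresh s j B B' : ~ occurs j B ->
  exists s', fresh (s' j) B' /\ agrees_on B s s'.
Proof.
  intros Hj. destruct (exists_fresh B') as [j' Hj'].
  exists (update s j j'). unfold update. split.
  - rewrite Nat.eqb_refl. exact Hj'.
  - intros i Hi. destruct (Nat.eqb_spec i j); [subst; contradiction | reflexivity].
Qed.

Lemma rule_app_rename s B B' alts : rule_app B alts -> embeds s B B' ->
  exists s', agrees_on B s s' /\ rule_app B' (map (map (rename_pform s')) alts).
Proof.
  intros Hr Hs.
  (* Only the rules introducing a fresh index need [s] redirected there. *)
  destruct Hr;
    try (exists s; split; [intros ? ?; reflexivity|];
         cbn; econstructor; eauto using embeds_PF, embeds_PR, occurs_embeds; fail).
  all: match goal with Hj : Defs.fresh _ _ |- _ =>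
         destruct (extend_fresh s _ _ B' (proj2 Hj)) as [s' [Hfr Hag]] end.
  all: pose proof (embeds_agrees _ _ _ _ Hs Hag) as Hs'.
  all: exists s'; split; [exact Hag|]; cbn; econstructor; eauto using embeds_PF, embeds_PR.
Qed.

Lemma refutable_rename s B B' : refutable B -> embeds s B B' -> refutable B'.
Proof.
  intros HB. revert s B'.
  induction HB as [B [[i [c [H1 H2]]] | [i H]] | B alts Hr _ IH]; intros s B' Hs.
  - apply ref_closed. left. exists (s i), c. eauto using embeds_PF.
  - apply ref_closed. right. exists (s i). eauto using embeds_PF.
  - destruct (rule_app_rename s B B' alts Hr Hs) as [s' [Hag Hr']].
    apply (ref_rule _ _ Hr'). intros A' HA'.
    apply in_map_iff in HA' as [A [<- HA]].
    apply (IH A HA s'). intros q Hq. rewrite <- map_rev, in_app_iff. cbn.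
    apply in_app_iff in Hq as [Hq | Hq].
    + left. apply in_map, Hq.
    + right. exact (embeds_agrees _ _ _ _ Hs Hag _ Hq).
Qed.

Lemma refutable_weaken B B' : refutable B -> incl B B' -> refutable B'.
Proof.
  intros H HB. apply (refutable_rename (fun n => n) B); [exact H|].
  intros [] Hq; exact (HB _ Hq).
Qed.

Lemma refutable_rule1 B A : rule_app B [A] -> refutable (rev A ++ B) -> refutable B.
Proof. intros Hr H. apply (ref_rule _ _ Hr). intros A' [<- | []]. exact H. Qed.

Lemma refutable_rule2 B A1 A2 : rule_app B [A1; A2] ->
  refutable (rev A1 ++ B) -> refutable (rev A2 ++ B) -> refutable B.
Proof. intros Hr H1 H2. apply (ref_rule _ _ Hr). intros A' [<- | [<- | []]]; assumption. Qed.

Lemma refutable_rule3 B A1 A2 A3 : rule_app B [A1; A2; A3] ->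
  refutable (rev A1 ++ B) -> refutable (rev A2 ++ B) -> refutable (rev A3 ++ B) ->
  refutable B.
Proof.
  intros Hr H1 H2 H3. apply (ref_rule _ _ Hr). intros A' [<- | [<- | [<- | []]]]; assumption.
Qed.

Ltac in_branch := cbn; tauto.

Ltac close_on i c := apply ref_closed; left; exists i, c; split; in_branch.

Lemma refutable_propagate_box i j f L B : In (PR i f j) B ->
  (forall c, In c L -> In (PF i (Box f c)) B) -> refutable (map (PF j) L ++ B) -> refutable B.
Proof.
  revert B. induction L as [|c L IH]; intros B Hr HL H; [exact H|].
  apply (refutable_rule1 _ [PF j c]); [apply (r_box _ i j f c); [apply HL; now left | exact Hr]|].
  apply IH; [now right | intros d Hd; right; apply HL; now right|].
  apply (refutable_weaken _ _ H). intros q. cbn. rewrite !in_app_iff. cbn. tauto.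
Qed.

Lemma refutable_add_top i B : occurs i B -> refutable (PF i Top :: B) -> refutable B.
Proof.
  intros Hi H. apply (refutable_rule2 B [PF i Top] [PF i (Neg Top)]).
  - apply r_cut, Hi.
  - exact H.
  - apply (refutable_rule1 _ [PF i Bot]); [apply r_nneg; in_branch|].
    apply ref_closed. right. exists i. in_branch.
Qed.

(* [Top] makes index 1 occur on the branch, which the cut rule requires. *)
Definition inconsistent (L : list form) : Prop := refutable (map (PF 1) (Top :: L)).

Lemma inconsistent_at i L B : inconsistent L -> occurs i B ->
  (forall a, In a L -> In (PF i a) B) -> refutable B.
Proof.
  intros HL Hi HB. apply (refutable_add_top i B Hi).
  apply (refutable_rename (fun _ => i) _ _ HL).
  intros q [<- | Hq]; [now left|right].
  apply in_map_iff in Hq as [a [<- Ha]]. exact (HB a Ha).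
Qed.

Lemma inconsistent_weaken L L' : inconsistent L -> incl L L' -> inconsistent L'.
Proof.
  intros H HL. apply (refutable_weaken _ _ H).
  apply incl_map, incl_cons; [now left | now apply incl_tl].
Qed.

Lemma inconsistent_cut a L : inconsistent (a :: L) -> inconsistent (Neg a :: L) -> inconsistent L.
Proof.
  intros H1 H2. unfold inconsistent.
  apply (refutable_rule2 _ [PF 1 a] [PF 1 (Neg a)]).
  - apply r_cut. exists Top. left. now left.
  - apply (refutable_weaken _ _ H1). intros q; cbn; tauto.
  - apply (refutable_weaken _ _ H2). intros q; cbn; tauto.
Qed.

Definition consistent (X : form -> Prop) : Prop :=
  ~ exists L, (forall a, In a L -> X a) /\ inconsistent L.

Definition maximal_consistent (X : form -> Prop) : Prop :=
  consistent X /\ forall a, X a \/ X (Neg a).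

Definition adjoin (X : form -> Prop) (a : form) : form -> Prop := fun b => X b \/ b = a.

Lemma list_in_adjoin X a L : (forall b, In b L -> adjoin X a b) ->
  exists L', (forall b, In b L' -> X b) /\ incl L (a :: L').
Proof.
  induction L as [|b L IH]; intros H.
  - exists []. split; [intros _ []|intros _ []].
  - destruct IH as [L' [HL' Hincl]]; [intros c Hc; apply H; now right|].
    destruct (H b (or_introl eq_refl)) as [Hb | ->].
    + exists (b :: L'). split.
      * intros c [<- | Hc]; auto.
      * intros c [<- | Hc]; [cbn; tauto|]. apply Hincl in Hc. cbn in *. tauto.
    + exists L'. split; [exact HL'|]. apply incl_cons; [now left | exact Hincl].
Qed.

Lemma consistent_adjoin X a : consistent X ->
  consistent (adjoin X a) \/ consistent (adjoin X (Neg a)).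
Proof.
  intros H. apply NNPP. intros Hn. apply not_or_and in Hn as [H1 H2].
  apply NNPP in H1 as [L1 [HL1 I1]]. apply NNPP in H2 as [L2 [HL2 I2]].
  destruct (list_in_adjoin _ _ _ HL1) as [L1' [A1 B1]].
  destruct (list_in_adjoin _ _ _ HL2) as [L2' [A2 B2]].
  apply H. exists (L1' ++ L2'). split.
  - intros b Hb. apply in_app_iff in Hb as [Hb | Hb]; auto.
  - apply (inconsistent_cut a).
    + apply (inconsistent_weaken _ _ I1). intros b Hb. apply B1 in Hb. cbn in *.
      rewrite in_app_iff. tauto.
    + apply (inconsistent_weaken _ _ I2). intros b Hb. apply B2 in Hb. cbn in *.
      rewrite in_app_iff. tauto.
Qed.

Fixpoint form_code (a : form) : nat :=
  match a with
  | Var p => to_nat (0, p)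
  | Bot => to_nat (1, 0)
  | Neg a => to_nat (2, form_code a)
  | Imp a b => to_nat (3, to_nat (form_code a, form_code b))
  | And a b => to_nat (4, to_nat (form_code a, form_code b))
  | Or a b => to_nat (5, to_nat (form_code a, form_code b))
  | Box a b => to_nat (6, to_nat (form_code a, form_code b))
  | Dia a b => to_nat (7, to_nat (form_code a, form_code b))
  end.

Lemma to_nat_inj p q : to_nat p = to_nat q -> p = q.
Proof. intros H. rewrite <- (cancel_of_to p), <- (cancel_of_to q), H. reflexivity. Qed.

Lemma form_code_inj a b : form_code a = form_code b -> a = b.
Proof.
  revert b. induction a; destruct b; cbn [form_code]; intros H; apply to_nat_inj in H;
    try congruence; apply pair_equal_spec in H as [_ H];
    try (apply to_nat_inj, pair_equal_spec in H as [H H']); f_equal; auto.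
Qed.

Definition form_of_code (n : nat) : form := epsilon (inhabits Bot) (fun a => form_code a = n).

Lemma form_of_code_surj a : exists n, form_of_code n = a.
Proof.
  exists (form_code a). apply form_code_inj.
  apply (epsilon_spec (inhabits Bot) (fun b => form_code b = form_code a)). now exists a.
Qed.

Fixpoint lindenbaum_chain (X : form -> Prop) (n : nat) : form -> Prop :=
  match n with
  | 0 => X
  | S n =>
      let Y := lindenbaum_chain X n in
      if excluded_middle_informative (consistent (adjoin Y (form_of_code n)))
      then adjoin Y (form_of_code n) else adjoin Y (Neg (form_of_code n))
  end.

Lemma lindenbaum_chain_consistent X n : consistent X -> consistent (lindenbaum_chain X n).
Proof.
  intros H. induction n as [|n IH]; cbn; [exact H|].
  destruct excluded_middle_informative as [Hc | Hc]; [exact Hc|].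
  now destruct (consistent_adjoin _ (form_of_code n) IH).
Qed.

Lemma lindenbaum_chain_mono X n m b : n <= m -> lindenbaum_chain X n b -> lindenbaum_chain X m b.
Proof.
  induction 1 as [|m _ IH]; [tauto|]. intros Hb. cbn.
  destruct excluded_middle_informative; left; auto.
Qed.

Lemma lindenbaum_chain_decides X n :
  lindenbaum_chain X (S n) (form_of_code n) \/ lindenbaum_chain X (S n) (Neg (form_of_code n)).
Proof. cbn. destruct excluded_middle_informative; [left | right]; now right. Qed.

Lemma lindenbaum_chain_list X L : (forall b, In b L -> exists n, lindenbaum_chain X n b) ->
  exists N, forall b, In b L -> lindenbaum_chain X N b.
Proof.
  induction L as [|c L IH]; intros HL; [now exists 0|].
  destruct IH as [N HN]; [intros b Hb; apply HL; now right|].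
  destruct (HL c (or_introl eq_refl)) as [m Hm].
  exists (max N m). intros b [<- | Hb].
  - apply (lindenbaum_chain_mono X m); [lia | exact Hm].
  - apply (lindenbaum_chain_mono X N); [lia | auto].
Qed.

Definition world : Type := { X : form -> Prop | maximal_consistent X }.

Definition world_formulas (w : world) : form -> Prop := proj1_sig w.
Coercion world_formulas : world >-> Funclass.

Lemma lindenbaum X : consistent X -> exists w : world, forall a, X a -> w a.
Proof.
  intros HX. set (Y b := exists n, lindenbaum_chain X n b).
  assert (HY : maximal_consistent Y).
  { split.
    - intros [L [HL Hi]]. destruct (lindenbaum_chain_list X L HL) as [N HN].
      apply (lindenbaum_chain_consistent X N HX). now exists L.
    - intros a. destruct (form_of_code_surj a) as [n <-].
      destruct (lindenbaum_chain_decides X n); [left | right]; now exists (S n). }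
  exists (exist _ Y HY). intros a Ha. now exists 0.
Qed.

Lemma world_not_inconsistent (w : world) L : (forall a, In a L -> w a) -> ~ inconsistent L.
Proof. intros HL Hi. apply (proj1 (proj2_sig w)). now exists L. Qed.

Lemma world_derives (w : world) L a :
  (forall b, In b L -> w b) -> inconsistent (Neg a :: L) -> w a.
Proof.
  intros HL Hi. destruct (proj2 (proj2_sig w) a) as [H | H]; [exact H|].
  exfalso. apply (world_not_inconsistent w (Neg a :: L)); [|exact Hi].
  intros b [<- | Hb]; auto.
Qed.

Lemma world_neg (w : world) a : w (Neg a) <-> ~ w a.
Proof.
  split.
  - intros H1 H2. apply (world_not_inconsistent w [a; Neg a]).
    + intros b [<- | [<- | []]]; assumption.
    + close_on 1 a.
  - intros H. now destruct (proj2 (proj2_sig w) a).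
Qed.

Lemma world_bot (w : world) : ~ w Bot.
Proof.
  intros H. apply (world_not_inconsistent w [Bot]).
  - intros b [<- | []]; exact H.
  - apply ref_closed. right. exists 1. in_branch.
Qed.

Lemma world_imp (w : world) a b : w (Imp a b) <-> (w a -> w b).
Proof.
  split.
  - intros H Ha. apply (world_derives w [Imp a b; a]); [intros c [<- | [<- | []]]; auto|].
    apply (refutable_rule2 _ [PF 1 (Neg a)] [PF 1 b]); [apply r_imp; in_branch | |].
    + close_on 1 a.
    + close_on 1 b.
  - intros H. destruct (classic (w a)) as [Ha | Ha].
    + apply (world_derives w [b]); [intros c [<- | []]; auto|].
      apply (refutable_rule1 _ [PF 1 a; PF 1 (Neg b)]); [apply r_nimp; in_branch|].
      close_on 1 b.
    + apply (world_derives w [Neg a]); [intros c [<- | []]; now apply world_neg|].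
      apply (refutable_rule1 _ [PF 1 a; PF 1 (Neg b)]); [apply r_nimp; in_branch|].
      close_on 1 a.
Qed.

Lemma world_and (w : world) a b : w (And a b) <-> w a /\ w b.
Proof.
  split.
  - intros H. split; apply (world_derives w [And a b]); try (intros c [<- | []]; exact H);
      apply (refutable_rule1 _ [PF 1 a; PF 1 b]); try (apply r_and; in_branch).
    + close_on 1 a.
    + close_on 1 b.
  - intros [Ha Hb]. apply (world_derives w [a; b]); [intros c [<- | [<- | []]]; auto|].
    apply (refutable_rule2 _ [PF 1 (Neg a)] [PF 1 (Neg b)]); [apply r_nand; in_branch | |].
    + close_on 1 a.
    + close_on 1 b.
Qed.

Lemma world_or (w : world) a b : w (Or a b) <-> w a \/ w b.
Proof.
  split.
  - intros H. apply NNPP. intros [Ha Hb]%not_or_and.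
    apply (world_not_inconsistent w [Or a b; Neg a; Neg b]).
    + intros c [<- | [<- | [<- | []]]]; [exact H | |]; now apply world_neg.
    + apply (refutable_rule2 _ [PF 1 a] [PF 1 b]); [apply r_or; in_branch | |].
      * close_on 1 a.
      * close_on 1 b.
  - intros [Hc | Hc].
    + apply (world_derives w [a]); [intros c [<- | []]; exact Hc|].
      apply (refutable_rule1 _ [PF 1 (Neg a); PF 1 (Neg b)]); [apply r_nor; in_branch|].
      close_on 1 a.
    + apply (world_derives w [b]); [intros c [<- | []]; exact Hc|].
      apply (refutable_rule1 _ [PF 1 (Neg a); PF 1 (Neg b)]); [apply r_nor; in_branch|].
      close_on 1 b.
Qed.

Lemma world_neg_dia (w : world) f p : w (Neg (Dia f p)) -> w (Box f (Neg p)).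
Proof.
  intros H. apply (world_derives w [Neg (Dia f p)]); [intros c [<- | []]; exact H|].
  apply (refutable_rule1 _ [PR 1 f 2; PF 2 (Neg (Neg p))]); [apply r_nbox; [in_branch | prove_fresh]|].
  apply (refutable_rule1 _ [PF 2 (Neg p)]); [apply (r_ndia _ 1 2 f p); in_branch|].
  close_on 2 (Neg p).
Qed.


Lemma world_complete L : ~ inconsistent L -> exists w : world, forall a, In a L -> w a.
Proof.
  intros H. apply lindenbaum. intros [L' [HL' Hi]].
  apply H, (inconsistent_weaken _ _ Hi). exact HL'.
Qed.

(* Applying ea to [1 r_f 2] and [f'] either closes by the equivalence of [f] and
   [f'] or yields [1 r_f' 2]. *)
Lemma world_box_congr f f' c (w : world) :
  (forall v : world, v f <-> v f') -> w (Box f' c) -> w (Box f c).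
Proof.
  intros Heq Hb.
  assert (E1 : inconsistent [Neg f; f']).
  { apply NNPP. intros [v Hv]%world_complete.
    apply (world_neg v f); [apply Hv; now left | apply Heq, Hv; right; now left]. }
  assert (E2 : inconsistent [f; Neg f']).
  { apply NNPP. intros [v Hv]%world_complete.
    apply (world_neg v f'); [apply Hv; right; now left | apply Heq, Hv; now left]. }
  apply (world_derives w [Box f' c]); [intros a [<- | []]; exact Hb|].
  apply (refutable_rule1 _ [PR 1 f 2; PF 2 (Neg c)]); [apply r_nbox; [in_branch | prove_fresh]|].
  apply (refutable_rule3 _ [PF 3 (Neg f); PF 3 f'] [PF 3 f; PF 3 (Neg f')] [PR 1 f' 2]);
    [apply r_ea; [in_branch | prove_fresh] | | |].
  - apply (inconsistent_at 3 _ _ E1); [exists f'; left; in_branch | intros a [<- | [<- | []]]; in_branch].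
  - apply (inconsistent_at 3 _ _ E2); [exists f; left; in_branch | intros a [<- | [<- | []]]; in_branch].
  - apply (refutable_rule1 _ [PF 2 c]); [apply (r_box _ 1 2 f' c); in_branch|].
    close_on 2 c.
Qed.

Definition boxes (f : form) (w : world) : form -> Prop := fun c => w (Box f c).

Lemma consistent_successor (w : world) f q t : w t ->
  (forall B, In (PF 1 t) B -> fresh 2 B -> rule_app B [[PR 1 f 2; PF 2 q]]) ->
  consistent (adjoin (boxes f w) q).
Proof.
  intros Ht Hrule [L [HL Hi]].
  destruct (list_in_adjoin _ _ _ HL) as [L' [HL' Hincl]].
  apply (world_not_inconsistent w (t :: map (Box f) L')).
  - intros a [<- | Ha]; [exact Ht|]. apply in_map_iff in Ha as [c [<- Hc]]. exact (HL' c Hc).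
  - apply (refutable_rule1 _ [PR 1 f 2; PF 2 q]); [apply Hrule; [in_branch | prove_fresh]|].
    apply (refutable_propagate_box 1 2 f L'); [in_branch | |].
    + intros c Hc. do 4 right. apply in_map, in_map, Hc.
    + apply (inconsistent_at 2 (q :: L')); [exact (inconsistent_weaken _ _ Hi Hincl) | |].
      * exists q. left. apply in_app_iff. right. in_branch.
      * intros a [<- | Ha]; apply in_app_iff; [right; in_branch | left; now apply in_map].
Qed.

Lemma world_box f p (w : world) :
  w (Box f p) <-> forall v : world, (forall c, w (Box f c) -> v c) -> v p.
Proof.
  split; [intros H v Hv; exact (Hv p H)|].
  intros H. apply NNPP. intros Hn. apply world_neg in Hn.
  destruct (lindenbaum _ (consistent_successor w f (Neg p) _ Hn
              (fun B Hi Hj => r_nbox B 1 2 f p Hi Hj))) as [v Hv].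
  apply (world_neg v p); [apply Hv; now right | apply H; intros c Hc; apply Hv; now left].
Qed.

Lemma world_dia f p (w : world) :
  w (Dia f p) <-> exists v : world, (forall c, w (Box f c) -> v c) /\ v p.
Proof.
  split.
  - intros H.
    destruct (lindenbaum _ (consistent_successor w f p _ H
                (fun B Hi Hj => r_dia B 1 2 f p Hi Hj))) as [v Hv].
    exists v. split; [intros c Hc; apply Hv; now left | apply Hv; now right].
  - intros [v [Hv Hp]]. apply NNPP. intros Hn. apply world_neg, world_neg_dia in Hn.
    exact (proj1 (world_neg v p) (Hv _ Hn) Hp).
Qed.

Definition defines (f : form) (S : world -> Prop) : Prop := forall w : world, S w <-> w f.

Definition canonical_P (S : world -> Prop) : Prop := exists f, defines f S.

Definition canonical_R (S : world -> Prop) (w v : world) : Prop :=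
  forall f, defines f S -> forall c, w (Box f c) -> v c.

Lemma canonical_R_defines f S w v : defines f S ->
  canonical_R S w v <-> (forall c, w (Box f c) -> v c).
Proof.
  intros Hf. split; [intros H; exact (H f Hf)|].
  intros H f' Hf' c Hc. apply H, (world_box_congr f f'); [|exact Hc].
  intros u. rewrite <- (Hf u), (Hf' u). reflexivity.
Qed.

Lemma canonical_P_ext S T : (forall w, S w <-> T w) -> canonical_P S -> canonical_P T.
Proof. intros H [f Hf]. exists f. intros w. rewrite <- H. apply Hf. Qed.

Lemma canonical_R_ext S T : canonical_P S -> (forall w, S w <-> T w) ->
  forall w v, canonical_R S w v <-> canonical_R T w v.
Proof.
  intros [f Hf] H w v. rewrite (canonical_R_defines f S), (canonical_R_defines f T); [reflexivity| |exact Hf].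
  intros u. rewrite <- H. apply Hf.
Qed.

Lemma canonical_P_empty : canonical_P (fun _ => False).
Proof. exists Bot. intros w. split; [tauto | apply world_bot]. Qed.

Lemma canonical_P_full : canonical_P (fun _ => True).
Proof. exists Top. intros w. unfold Top. rewrite world_neg. split; [intros _; apply world_bot | tauto]. Qed.

Lemma canonical_P_compl S : canonical_P S -> canonical_P (fun w => ~ S w).
Proof. intros [f Hf]. exists (Neg f). intros w. rewrite world_neg, (Hf w). reflexivity. Qed.

Lemma canonical_P_inter S T : canonical_P S -> canonical_P T -> canonical_P (fun w => S w /\ T w).
Proof. intros [f Hf] [g Hg]. exists (And f g). intros w. rewrite world_and, (Hf w), (Hg w). reflexivity. Qed.

Lemma canonical_P_union S T : canonical_P S -> canonical_P T -> canonical_P (fun w => S w \/ T w).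
Proof. intros [f Hf] [g Hg]. exists (Or f g). intros w. rewrite world_or, (Hf w), (Hg w). reflexivity. Qed.

Lemma canonical_P_box S T : canonical_P S -> canonical_P T ->
  canonical_P (fun w => forall v, canonical_R S w v -> T v).
Proof.
  intros [f Hf] [g Hg]. exists (Box f g). intros w. rewrite world_box.
  split; intros H v Hv; apply Hg, H.
  - exact (proj2 (canonical_R_defines f S w v Hf) Hv).
  - exact (proj1 (canonical_R_defines f S w v Hf) Hv).
Qed.

Lemma canonical_V_P p : canonical_P (fun w => w (Var p)).
Proof. exists (Var p). intros w. reflexivity. Qed.

Definition canonical_model (w0 : world) : model :=
  {| U := world; u0 := w0; P := canonical_P; R := canonical_R; V p w := w (Var p);
     P_ext := canonical_P_ext; R_ext := canonical_R_ext;
     P_empty := canonical_P_empty; P_full := canonical_P_full; P_compl := canonical_P_compl;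
     P_inter := canonical_P_inter; P_union := canonical_P_union; P_box := canonical_P_box;
     V_P := canonical_V_P |}.

Lemma canonical_truth w0 a : forall w : world, sat (canonical_model w0) w a <-> w a.
Proof.
  induction a as [p | | a IH | a IHa b IHb | a IHa b IHb | a IHa b IHb | a IHa b IHb | a IHa b IHb];
    intros w; cbn [sat].
  - reflexivity.
  - split; [tauto | apply world_bot].
  - rewrite world_neg, IH. reflexivity.
  - rewrite world_imp, IHa, IHb. reflexivity.
  - rewrite world_and, IHa, IHb. reflexivity.
  - rewrite world_or, IHa, IHb. reflexivity.
  - rewrite world_box. cbn.
    setoid_rewrite (fun v => canonical_R_defines a _ w v IHa). setoid_rewrite IHb. reflexivity.
  - rewrite world_dia. cbn.
    setoid_rewrite (fun v => canonical_R_defines a _ w v IHa). setoid_rewrite IHb. reflexivity.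
Qed.

Lemma closable_of_refutable Gamma phi B : refutable B -> closable Gamma phi B.
Proof.
  induction 1 as [B H | B alts H _ IH]; [now apply cl_closed | exact (cl_rule _ _ _ _ H IH)].
Qed.

Lemma closable_assume_all Gamma phi A B : (forall p, In p A -> assumption Gamma phi p) ->
  closable Gamma phi (A ++ B) -> closable Gamma phi B.
Proof.
  induction A as [|p A IH]; intros HA H; [exact H|].
  apply IH; [intros q Hq; apply HA; now right|].
  apply (cl_assume _ _ _ p); [apply HA; now left | exact H].
Qed.

Lemma derivable_of_inconsistent Gamma phi L :
  (forall a, In a L -> adjoin Gamma (Neg phi) a) -> inconsistent L -> derivable Gamma phi.
Proof.
  intros HL Hi. apply (closable_assume_all _ _ (map (PF 1) (Neg phi :: L))).
  - intros p Hp. apply in_map_iff in Hp as [a [<- [<- | Ha]]]; [now right|].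
    destruct (HL a Ha) as [HG | ->]; [left; now exists a | now right].
  - rewrite app_nil_r. apply closable_of_refutable, (inconsistent_at 1 L); [exact Hi| |].
    + exists (Neg phi). left. now left.
    + intros a Ha. right. now apply in_map.
Qed.

Theorem mainTheorem6 : forall (Gamma : form -> Prop) (phi : form),
  entails Gamma phi -> derivable Gamma phi.
Proof.
  intros Gamma phi Hent. apply NNPP. intros Hnd.
  assert (Hcons : consistent (adjoin Gamma (Neg phi))).
  { intros [L [HL Hi]]. exact (Hnd (derivable_of_inconsistent Gamma phi L HL Hi)). }
  destruct (lindenbaum _ Hcons) as [w Hw].
  assert (Hphi : w phi).
  { apply (canonical_truth w phi w), Hent.
    intros psi Hpsi. apply canonical_truth, Hw. now left. }
  apply (world_neg w phi); [apply Hw; now right | exact Hphi].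
Qed.
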